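(* Let $\delta\in(0,1/2)$, let $V$ be a finite set of $[-1,1]$-valued trees of depth $n$, let $\mathbf{p}$ be a $[\delta,1-\delta]$-valued tree of depth $n$, and let $c>0$. Then $$\mathbb{E}_y\max_{\mathbf{v}\in V}\Big[\sum_{t=1}^n\eta(\mathbf{p}_t(y),y_t)\mathbf{v}_t(y)-c\,\mathbf{v}_t(y)^2\Big]\le\frac{\log|V|}{\delta\log(1+\frac c2)},$$ where $y_t\mid y_1,\dots,y_{t-1}\sim\mathrm{Bernoulli}(\mathbf{p}_t(y_1,\dots,y_{t-1}))$. Furthermore, the same upper bound holds if $\mathbf{p}$ is any $[0,1]$-valued tree but the summation is restricted to $\{t:\mathbf{p}_t(y)\in[\delta,1-\delta]\}$.
   Context: A $\mathcal{Z}$-valued tree $\mathbf{z}$ of depth $n$ is a sequence of maps $\mathbf{z}_t:\{0,1\}^{t-1}\to\mathcal{Z}$, $t=1,\dots,n$; for $y\in\{0,1\}^n$, $\mathbf{z}_t(y)=\mathbf{z}_t(y_1,\dots,y_{t-1})$. $\eta(p,a)=-\mathbf{1}\{a=1\}p^{-1}+\mathbf{1}\{a=0\}(1-p)^{-1}$. Bernoulli$(p)$ means the $\{0,1\}$-valued variable equal to $1$ with probability $p$. *)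

From mathcomp Require Import all_boot all_order all_algebra.
From mathcomp Require Import all_classical all_reals all_analysis.
Set Implicit Arguments. Unset Strict Implicit. Unset Printing Implicit Defensive.
Import Order.TTheory GRing.Theory Num.Theory.
Local Open Scope ring_scope.

(* A real-valued binary tree: [z t s] is the value of the (t+1)-th map
   z_{t+1} at the prefix s = (y_1,...,y_t) in {0,1}^t (true = 1, false = 0).
   Only arguments with size s = t (t < n) are relevant for depth n. *)
Definition tree (R : Type) := nat -> seq bool -> R.

Definition tree_at {R : Type} (z : tree R) (t : nat) (y : seq bool) : R :=
  z t (take t y).

Definition tree_in {R : realType} (n : nat) (a b : R) (z : tree R) : Prop :=
  forall (t : nat) (s : seq bool), (t < n)%N -> size s = t -> a <= z t s <= b.

Definition etaf {R : realType} (p : R) (a : bool) : R :=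
  if a then - p^-1 else (1 - p)^-1.

Definition path_prob {R : realType} (n : nat) (p : tree R) (y : n.-tuple bool) : R :=
  \prod_(t < n) (if tnth y t then tree_at p t y else 1 - tree_at p t y).

Definition Ey {R : realType} (n : nat) (p : tree R) (F : n.-tuple bool -> R) : R :=
  \sum_(y : n.-tuple bool) path_prob p y * F y.

Definition fmax {R : realType} (I : finType) (i0 : I) (F : I -> R) : R :=
  \big[Num.max/F i0]_(i : I) F i.

From mathcomp Require Import all_boot all_order all_algebra.
From mathcomp Require Import all_classical all_reals all_analysis.
From mathcomp Require Import ring lra.

(* With [lambda = delta ln (1 + c/2)], one step of the game has an exponential
   moment at most 1 whenever [p_t] lies in [[delta, 1 - delta]]: [eta] has
   conditional mean 0 and [|lambda eta v| <= L := ln (1 + c/2)], so the bound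
   [e^x - 1 - x <= (x/L)^2 (e^L - 1 - L)] on [[-L, L]] makes the quadratic
   correction at most [lambda c v^2], which the penalty [- c v^2] absorbs.
   The restriction to the steps with [p_t] in that interval is decided by the
   prefix, so [exp (lambda * sum of gains)] stays a supermartingale and has
   mean at most 1 for every [v].  Jensen's inequality and [exp max <= sum exp]
   then give [E max <= ln |V| / lambda]. *)

Set Implicit Arguments. Unset Strict Implicit. Unset Printing Implicit Defensive.
Import Order.TTheory GRing.Theory Num.Theory.
Local Open Scope ring_scope.

Section ExpInequalities.
Variable R : realType.

Lemma expR_sub1_sub_le (x L : R) : 0 < L -> `|x| <= L ->
  expR x - 1 - x <= (x / L) ^+ 2 * (expR L - 1 - L).
Proof.
move=> L0 xL; set s := (x / L) ^+ 2.
suff : expR x - s * expR L <= 1 + x - s * (1 + L) by lra.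
have h := cvgB (is_cvg_series_exp_coeff x) (cvgMl_tmp (a:=s) (is_cvg_series_exp_coeff L)).
have E := cvg_lim _ (h _ _); rewrite -/(expR x) -/(expR L) in E.
rewrite -E //; apply: limr_le; first exact: (cvgP _ (h _ _)).
near=> k.
have k2 : (2 <= k)%N by near: k; exists 2%N.
rewrite (_ : forall (f g : nat -> R) n, (f - g) n = f n - g n) //.
rewrite -(subnK k2) /series /= addn2 !big_nat_recl // /exp_coeff.
rewrite /= !expr0 !expr1 !fact0 ?fact1 !divr1.
(* from degree 2 on the terms compare: [x^(i+2) <= x^2 L^i = s L^(i+2)] *)
suff : \sum_(0 <= i < k - 2) x ^+ i.+2 / i.+2`!%:R <=
       s * \sum_(0 <= i < k - 2) L ^+ i.+2 / i.+2`!%:R by lra.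
rewrite big_distrr /=; apply: ler_sum => i _.
rewrite mulrA ler_pM2r ?invr_gt0 ?ltr0n ?fact_gt0 //.
have -> : s * L ^+ i.+2 = x ^+ 2 * L ^+ i by rewrite /s !exprS; field; rewrite gt_eqF.
rewrite -addn2 exprD mulrC ler_wpM2l ?sqr_ge0 //.
apply: (le_trans (ler_norm _)); rewrite normrX.
by apply: lerXn2r; rewrite ?nnegrE ?normr_ge0 // ltW.
Unshelve. all: by end_near.
Qed.

Lemma expR_sub1_sub_scaled_le (d L q v : R) : 0 < d -> d <= q -> 0 < L -> `|v| <= 1 ->
  q * (expR (d * L * v / q) - 1 - d * L * v / q) <= d * v ^+ 2 * (expR L - 1 - L).
Proof.
move=> d0 dq L0 v1; have q0 : 0 < q := lt_le_trans d0 dq.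
have K0 : 0 <= expR L - 1 - L by have := expR_ge1Dx L; lra.
have xL : `|d * L * v / q| <= L.
  rewrite normrM normfV !normrM (gtr0_norm d0) (gtr0_norm L0) (gtr0_norm q0).
  have vdq : `|v| * d <= 1 * q by rewrite ler_pM // ltW.
  by rewrite ler_pdivrMr //; nra.
apply: (le_trans (ler_wpM2l (ltW q0) (expR_sub1_sub_le L0 xL))).
have -> : d * L * v / q / L = d * v / q by field; rewrite !gt_eqF.
have -> : q * ((d * v / q) ^+ 2 * (expR L - 1 - L)) =
          d / q * (d * v ^+ 2 * (expR L - 1 - L)) by field; rewrite gt_eqF.
have dK0 : 0 <= d * v ^+ 2 * (expR L - 1 - L) by rewrite mulr_ge0 // mulr_ge0 ?sqr_ge0 // ltW.
by rewrite ler_piMl // ler_pdivrMr // mul1r.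
Qed.

Lemma one_sub_inv_le_ln (a : R) : 0 < a -> 1 - a^-1 <= ln a.
Proof.
move=> a0; have : -1 < a^-1 - 1 by rewrite ltrBrDl subrr invr_gt0.
by move/le_ln1Dx; rewrite [1 + _]addrC subrK lnV ?posrE //; lra.
Qed.

Lemma bernoulli_expR_increment_le1 (d c p v : R) :
  0 < d -> 0 < c -> d <= p <= 1 - d -> `|v| <= 1 ->
  p * expR (d * ln (1 + c / 2) * (etaf p true * v - c * v ^+ 2))
  + (1 - p) * expR (d * ln (1 + c / 2) * (etaf p false * v - c * v ^+ 2)) <= 1.
Proof.
move=> d0 c0 /andP[dp pd] v1.
set a := 1 + c / 2; set L := ln a; set K := expR L - 1 - L.
have a0 : 0 < a by rewrite /a; lra.
have L0 : 0 < L by apply: ln_gt0; rewrite /a; lra.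
have p0 : 0 < p := lt_le_trans d0 dp.
have q0 : 0 < 1 - p by lra.
(* [2 K = c - 2 L <= L c] is [c / (2 + c) <= ln (1 + c / 2)] *)
have KLc : 2 * K <= L * c.
  have := one_sub_inv_le_ln a0; rewrite /K lnK ?posrE // -/L /a.
  have -> : 1 - (1 + c / 2)^-1 = c / (2 + c) by field; rewrite gt_eqF //; lra.
  by rewrite ler_pdivrMr => [?|]; lra.
set z := d * L * c * v ^+ 2.
have e1 : d * L * (etaf p true * v - c * v ^+ 2) = d * L * (- v) / p - z.
  by rewrite /etaf /z; field; rewrite gt_eqF.
have e2 : d * L * (etaf p false * v - c * v ^+ 2) = d * L * v / (1 - p) - z.
  by rewrite /etaf /z; field; rewrite gt_eqF.
have B1 := expR_sub1_sub_scaled_le (v := - v) d0 dp L0 (ltac:(by rewrite normrN)).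
have B2 := expR_sub1_sub_scaled_le (q := 1 - p) d0 (ltac:(lra) : d <= 1 - p) L0 v1.
rewrite sqrrN in B1; rewrite e1 e2 !expRB !mulrA -mulrDl ler_pdivrMr ?expR_gt0 // mul1r.
have mean0 : p * (d * L * - v / p) + (1 - p) * (d * L * v / (1 - p)) = 0.
  by field; rewrite !gt_eqF.
have dvK : 2 * (d * v ^+ 2 * K) <= z.
  have -> : z = d * v ^+ 2 * (L * c) by rewrite /z; ring.
  by rewrite mulrCA ler_wpM2l // mulr_ge0 ?sqr_ge0 // ltW.
have := expR_ge1Dx z; rewrite -/K in B1 B2; lra.
Qed.
End ExpInequalities.

Section PathProducts.
Variable R : realType.

Definition prod_along n (h : nat -> seq bool -> bool -> R) (y : n.-tuple bool) : R :=
  \prod_(t < n) h t (take t y) (tnth y t).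

Lemma size_take_ord (T : Type) n (t : 'I_n) (y : n.-tuple T) : size (take t y) = t.
Proof. by rewrite size_takel // size_tuple ltnW. Qed.

Lemma sum_tuple0 (T : finType) (F : 0.-tuple T -> R) :
  \sum_(y : 0.-tuple T) F y = F [tuple].
Proof.
rewrite (eq_bigr (fun=> F [tuple])) => [|y _]; last by rewrite (tuple0 y).
by rewrite sumr_const card_tuple expn0.
Qed.

Lemma sum_tupleS (T : finType) n (F : n.+1.-tuple T -> R) :
  \sum_(y : n.+1.-tuple T) F y = \sum_(b : T) \sum_(y : n.-tuple T) F [tuple of b :: y].
Proof.
rewrite pair_big /= (reindex (fun q : T * n.-tuple T => [tuple of q.1 :: q.2])) /=.
  by apply: eq_bigr => -[b y].
exists (fun y => (thead y, [tuple of behead y])) => [[b y] _|y _] /=.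
  by congr pair; apply: val_inj.
by rewrite [RHS]tuple_eta; apply: val_inj.
Qed.

Lemma prod_along_cons n h b (y : n.-tuple bool) :
  prod_along h [tuple of b :: y] =
  h 0%N [::] b * prod_along (fun t s => h t.+1 (b :: s)) y.
Proof.
rewrite /prod_along big_ord_recl; congr (_ * _).
by apply: eq_bigr => t _; rewrite !(tnth_nth b).
Qed.

Lemma sum_prod_along_le1 n (h : nat -> seq bool -> bool -> R) :
  (forall t s, (t < n)%N -> size s = t ->
     [/\ 0 <= h t s true, 0 <= h t s false & h t s true + h t s false <= 1]) ->
  \sum_(y : n.-tuple bool) prod_along h y <= 1.
Proof.
elim: n h => [|n IH] h hs; first by rewrite sum_tuple0 /prod_along big_ord0.
have [h1 h0 h10] := hs 0%N [::] isT erefl.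
have IHb b : \sum_(y : n.-tuple bool) prod_along (fun t s => h t.+1 (b :: s)) y <= 1.
  by apply: IH => t s tn st; apply: hs => //=; rewrite st.
rewrite sum_tupleS big_bool /=.
under eq_bigr do rewrite prod_along_cons.
under [X in _ + X]eq_bigr do rewrite prod_along_cons.
rewrite -!mulr_sumr; apply: le_trans h10.
by rewrite lerD // ler_piMr.
Qed.

Lemma sum_prod_along_eq1 n (h : nat -> seq bool -> bool -> R) :
  (forall t s, (t < n)%N -> size s = t -> h t s true + h t s false = 1) ->
  \sum_(y : n.-tuple bool) prod_along h y = 1.
Proof.
elim: n h => [|n IH] h hs; first by rewrite sum_tuple0 /prod_along big_ord0.
rewrite sum_tupleS big_bool /=.
under eq_bigr do rewrite prod_along_cons.
under [X in _ + X]eq_bigr do rewrite prod_along_cons.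
rewrite -!mulr_sumr !IH ?mulr1 ?(hs 0%N [::]) // => t s tn st.
all: by apply: hs => //=; rewrite st.
Qed.

End PathProducts.

Section ExponentialMoments.
Variable R : realType.

Lemma expR_jensen (T : finType) (w F : T -> R) (l : R) :
  (forall y, 0 <= w y) -> \sum_y w y = 1 ->
  expR (l * \sum_y w y * F y) <= \sum_y w y * expR (l * F y).
Proof.
move=> w0 w1; set m := \sum_y w y * F y; set e := expR (l * m).
have tangent y : w y * (e * (1 + l * (F y - m))) <= w y * expR (l * F y).
  rewrite ler_wpM2l // -[l * F y](subrK (l * m)) expRD mulrC ler_wpM2r ?expR_ge0 //.
  by rewrite -mulrBr; exact: expR_ge1Dx.
apply: le_trans (ler_sum _ (fun y _ => tangent y)).
have -> : \sum_y w y * (e * (1 + l * (F y - m))) =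
          \sum_y (e * w y + e * l * (w y * F y) - e * l * m * w y).
  by apply: eq_bigr => y _; ring.
rewrite sumrB big_split /= -!mulr_sumr w1 -/m.
by rewrite le_eqVlt; apply/orP; left; apply/eqP; ring.
Qed.

Lemma expR_fmax_le_sum (I : finType) (i0 : I) (X : I -> R) (l : R) :
  expR (l * fmax i0 X) <= \sum_i expR (l * X i).
Proof.
have le_sum i : expR (l * X i) <= \sum_i expR (l * X i).
  by rewrite (bigD1 i) //= lerDl sumr_ge0 // => j _; exact: expR_ge0.
apply: (big_ind (fun x => expR (l * x) <= \sum_i expR (l * X i))) => // x y.
by rewrite /Num.max; case: (x < y).
Qed.

Lemma mean_fmax_le (T I : finType) (i0 : I) (w : T -> R) (X : I -> T -> R) (l : R) :
  0 < l -> (forall y, 0 <= w y) -> \sum_y w y = 1 ->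
  (forall i, \sum_y w y * expR (l * X i y) <= 1) ->
  \sum_y w y * fmax i0 (X ^~ y) <= ln #|I|%:R / l.
Proof.
move=> l0 w0 w1 mgf.
have I0 : 0 < #|I|%:R :> R by rewrite ltr0n; apply/card_gt0P; exists i0.
rewrite ler_pdivlMr // [leLHS]mulrC -[l * _]expRK ler_ln ?posrE ?expR_gt0 //.
apply: (le_trans (expR_jensen (fun y => fmax i0 (X ^~ y)) l w0 w1)).
apply: (@le_trans _ _ (\sum_y w y * \sum_i expR (l * X i y))).
  by apply: ler_sum => y _; rewrite ler_wpM2l ?expR_fmax_le_sum.
under eq_bigr do rewrite mulr_sumr.
rewrite exchange_big /=; apply: (le_trans (ler_sum _ (fun i _ => mgf i))).
by rewrite sumr_const.
Qed.

End ExponentialMoments.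

Section PredictableGains.
Variables (R : realType) (n : nat) (p : tree R) (d c : R).
Hypotheses (d0 : 0 < d) (c0 : 0 < c) (p01 : tree_in n 0 1 p).
Variable S : nat -> seq bool -> bool.
Hypothesis S_in : forall t s, (t < n)%N -> size s = t -> S t s -> d <= p t s <= 1 - d.

Lemma path_prob_ge0 (y : n.-tuple bool) : 0 <= path_prob p y.
Proof.
apply: prodr_ge0 => t _; have /andP[pt0 pt1] := p01 (ltn_ord t) (size_take_ord t y).
by rewrite /tree_at; case: (tnth y t); rewrite ?subr_ge0.
Qed.

Lemma sum_path_prob : \sum_(y : n.-tuple bool) path_prob p y = 1.
Proof.
apply: (sum_prod_along_eq1 (h := fun t s (b : bool) => if b then p t s else 1 - p t s)).
by move=> t s _ _; rewrite subrKC.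
Qed.

Lemma Ey_expR_gains_le1 (v : tree R) : tree_in n (-1) 1 v ->
  Ey p (fun y : n.-tuple bool => expR (d * ln (1 + c / 2) *
    \sum_(t < n | S t (take t y))
      (etaf (tree_at p t y) (tnth y t) * tree_at v t y - c * tree_at v t y ^+ 2))) <= 1.
Proof.
move=> v11.
pose h t s (b : bool) := (if b then p t s else 1 - p t s) *
  (if S t s then expR (d * ln (1 + c / 2) * (etaf (p t s) b * v t s - c * v t s ^+ 2))
   else 1).
have -> : Ey p (fun y : n.-tuple bool => expR (d * ln (1 + c / 2) *
    \sum_(t < n | S t (take t y))
      (etaf (tree_at p t y) (tnth y t) * tree_at v t y - c * tree_at v t y ^+ 2))) =
  \sum_(y : n.-tuple bool) prod_along h y.
  apply: eq_bigr => y _.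
  by rewrite mulr_sumr expR_sum big_mkcond /path_prob -big_split.
apply: sum_prod_along_le1 => t s tn st; rewrite /h.
have /andP[pt0 pt1] := p01 tn st.
case: ifP => [/(S_in tn st) pt_in | _]; last by rewrite !mulr1 subr_ge0; split; lra.
have /andP[vt0 vt1] := v11 _ _ tn st.
rewrite !mulr_ge0 ?expR_ge0 ?subr_ge0 //; split => //.
by apply: bernoulli_expR_increment_le1; rewrite ?ler_norml ?vt0.
Qed.

Lemma Ey_fmax_gains_le (I : finType) (i0 : I) (v : I -> tree R) :
  (forall i, tree_in n (-1) 1 (v i)) ->
  Ey p (fun y : n.-tuple bool => fmax i0 (fun i => \sum_(t < n | S t (take t y))
      (etaf (tree_at p t y) (tnth y t) * tree_at (v i) t y - c * tree_at (v i) t y ^+ 2)))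
  <= ln #|I|%:R / (d * ln (1 + c / 2)).
Proof.
move=> v11; apply: mean_fmax_le => [|||i]; last exact: Ey_expR_gains_le1.
- by rewrite mulr_gt0 // ln_gt0 // ltrDl divr_gt0.
- exact: path_prob_ge0.
- exact: sum_path_prob.
Qed.

End PredictableGains.

Theorem lemma1 (R : realType) (delta c : R) (n : nat)
  (I : finType) (i0 : I) (v : I -> tree R) :
  0 < delta -> delta < 1 / 2 -> 0 < c ->
  (forall i j, (forall (t : nat) (s : seq bool), (t < n)%N -> size s = t ->
      v i t s = v j t s) -> i = j) ->
  (forall i, tree_in n (-1) 1 (v i)) ->
  (forall p : tree R, tree_in n delta (1 - delta) p ->
     Ey p (fun y : n.-tuple bool =>
       fmax i0 (fun i => \sum_(t < n)
         (etaf (tree_at p t y) (tnth y t) * tree_at (v i) t y - c * (tree_at (v i) t y) ^+ 2)))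
     <= ln (#|I|%:R) / (delta * ln (1 + c / 2)))
  /\
  (forall p : tree R, tree_in n 0 1 p ->
     Ey p (fun y : n.-tuple bool =>
       fmax i0 (fun i => \sum_(t < n | (delta <= tree_at p t y <= 1 - delta))
         (etaf (tree_at p t y) (tnth y t) * tree_at (v i) t y - c * (tree_at (v i) t y) ^+ 2)))
     <= ln (#|I|%:R) / (delta * ln (1 + c / 2))).
Proof.
move=> d0 _ c0 _ v11; split => p p_in.
- have p01 : tree_in n 0 1 p.
    by move=> t s tn st; case/andP: (p_in t s tn st) => *; apply/andP; split; lra.
  by apply: (Ey_fmax_gains_le (S := fun _ _ => true) d0 c0 p01) => // t s tn st _; apply: p_in.
- by apply: (Ey_fmax_gains_le (S := fun t s => delta <= p t s <= 1 - delta) d0 c0 p_in).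
Qed.
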